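(* (i) For every $\mathbb G$-stopping time $\hat\sigma$ with values in $[0,T]$ there exists an $\mathbb F$-stopping time $\sigma$ with values in $[0,T]$ such that $\hat X_{\hat\sigma}=\hat X_{\sigma\wedge\vartheta}=\hat X_\sigma$. (ii) For every $\mathbb F$-stopping time $\sigma$ with values in $[0,T]$ there exists an $\mathbb F^\sigma$-optional process $x(\sigma)$ such that $\hat X_\sigma=x_\vartheta(\sigma)$.
   Context: Let $(\Omega,\mathcal G,\mathbb P)$ be a probability space with a filtration $\mathbb F=(\mathcal F_t)$ satisfying the usual conditions, $\vartheta$ a strictly positive finite random time and $\mathbb G$ the progressive enlargement of $\mathbb F$ by $\vartheta$ (smallest right-continuous filtration containing $\mathbb F$ making $\vartheta$ a stopping time). Fix $T>0$. $P,R$ are bounded $\mathbb F$-optional processes and the payoff process is $\hat X=P\mathbb 1_{[\![0,\vartheta[\![}+R_\vartheta\mathbb 1_{[\![\vartheta,\infty[\![}$. For an $\mathbb F$-stopping time $\sigma$, $\mathbb F^\sigma=(\mathcal F_{\sigma\wedge t})_{t\ge0}$ is the stopped filtration, and $x_\vartheta(\sigma)$ denotes the process $x(\sigma)$ evaluated at time $\vartheta$. *)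

From HB Require Import structures.
From mathcomp Require Import all_boot all_order all_algebra.
From mathcomp Require Import all_classical all_reals all_analysis.
Set Implicit Arguments. Unset Strict Implicit. Unset Printing Implicit Defensive.
Import Order.TTheory GRing.Theory Num.Theory.
Local Open Scope classical_set_scope.
Local Open Scope ring_scope.

Section defs.
Context {d : measure_display} {Omega : measurableType d} {R : realType}.

(* A filtration indexed by [0, +oo): sub-sigma-algebras of the ambient one,
   increasing in time (values at negative times are irrelevant). *)
Definition filtration (F : R -> set (set Omega)) : Prop :=
  [/\ (forall t, 0 <= t -> sigma_algebra setT (F t)),
      (forall t, 0 <= t -> F t `<=` measurable) &
      (forall s t, 0 <= s -> s <= t -> F s `<=` F t)].

Definition right_continuous (F : R -> set (set Omega)) : Prop :=
  forall t, 0 <= t -> F t = \bigcap_(s in [set s | t < s]) F s.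

Definition usual_conditions (P : probability Omega R)
  (F : R -> set (set Omega)) : Prop :=
  [/\ filtration F, right_continuous F &
      (forall N A, measurable N -> P N = 0%E -> A `<=` N -> F 0 A)].

Definition stopping_time (F : R -> set (set Omega)) (tau : Omega -> \bar R)
  : Prop :=
  (forall w, (0 <= tau w)%E) /\
  (forall t, 0 <= t -> F t [set w | (tau w <= t%:E)%E]).

(* progressive enlargement: the smallest right-continuous filtration
   containing F and making theta a stopping time (intersection of all such) *)
Definition prog_enl (F : R -> set (set Omega)) (theta : Omega -> R)
  : R -> set (set Omega) :=
  fun t => [set A | forall H : R -> set (set Omega),
    filtration H -> right_continuous H ->
    (forall s, 0 <= s -> F s `<=` H s) ->
    stopping_time H (fun w => (theta w)%:E) -> H t A].

Definition F_at (F : R -> set (set Omega)) (tau : Omega -> \bar R)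
  : set (set Omega) :=
  [set A | measurable A /\
     forall s, 0 <= s -> F s (A `&` [set w | (tau w <= s%:E)%E])].

Definition stopped_filtration (F : R -> set (set Omega))
  (sigma : Omega -> \bar R) : R -> set (set Omega) :=
  fun t => F_at F (fun w => Order.min (sigma w) t%:E).

Definition optional_sets (F : R -> set (set Omega)) : set (set (Omega * R)) :=
  <<s [set p | 0 <= p.2],
      [set [set p | 0 <= p.2 /\ (tau p.1 <= (p.2)%:E)%E]
         | tau in [set tau | stopping_time F tau]] >>.

Definition optional (F : R -> set (set Omega)) (X : Omega -> R -> R) : Prop :=
  forall B : set R, measurable B ->
    optional_sets F [set p | 0 <= p.2 /\ B (X p.1 p.2)].

Definition bounded_process (X : Omega -> R -> R) : Prop :=
  exists M : R, forall w t, `|X w t| <= M.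

Definition Xhat (Pp Rp : Omega -> R -> R) (theta : Omega -> R)
  (w : Omega) (t : R) : R :=
  if t < theta w then Pp w t else Rp w (theta w).

End defs.

From Pilot Require Import Defs.
From HB Require Import structures.
From mathcomp Require Import all_boot all_order all_algebra.
From mathcomp Require Import all_classical all_reals all_analysis.
Import Order.TTheory GRing.Theory Num.Theory.
Local Open Scope classical_set_scope.
Local Open Scope ring_scope.
Set Implicit Arguments.
Unset Strict Implicit.
Unset Printing Implicit Defensive.

(** (i) The events [pre_theta t] that agree with an [F_t]-event on
  [{t < theta}] form a right-continuous filtration containing [F] for which
  [theta] is a stopping time, hence they contain the progressive enlargement.
  So [{sh <= t}] agrees on [{t < theta}] with some [C_t] in [F_t], and the
  hitting time [inf ({T} U {q rational | q in C_q})] is, by right-continuity,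
  an [F]-stopping time equal to [sh] up to [theta]; the payoff sees its time
  argument only through its minimum with [theta].
  (ii) [x_t := 1_{s < t} P_s + 1_{t <= s} R_t] is the payoff at [s] computed
  as if [theta] were the constant [t].  It is assembled from [P] and [R]
  stopped at [s] and from [{s < t}], which are [F^s]-optional because an
  [F]-stopping time [tau] restricted to [{tau <= s}] is an [F^s]-stopping
  time. *)

Section sigma_algebra_closure.
Variables (T : Type) (D : set T) (G : set (set T)).
Hypothesis sG : sigma_algebra D G.

Lemma sigmaU A B : G A -> G B -> G (A `|` B).
Proof. by case: sG => G0 _ GU GA GB; rewrite -bigcup2E; apply: GU => -[|[|n]]. Qed.

Lemma sigma_ite (c : T -> bool) (S1 S2 : set T) :
  G (D `&` [set x | c x]) -> G S1 -> G S2 ->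
  G [set x | D x /\ (if c x then S1 x else S2 x)].
Proof.
case: sG => _ GD _ GA GS1 GS2.
have -> : [set x | D x /\ (if c x then S1 x else S2 x)] =
    (D `\` ((D `\` (D `&` [set x | c x])) `|` (D `\` S1))) `|`
    (D `\` ((D `&` [set x | c x]) `|` (D `\` S2))).
  have tt : is_true true by [].
  have ff : ~ is_true false by [].
  apply/seteqP; split=> x /=; case: (c x);
    by have [?|?] := pselect (S1 x); have [?|?] := pselect (S2 x); tauto.
by apply: sigmaU; apply: (GD); apply: sigmaU => //; apply: (GD).
Qed.

End sigma_algebra_closure.

Section sigma_algebra_setT_closure.
Variables (T : Type) (G : set (set T)).
Hypothesis sG : sigma_algebra setT G.

Lemma sigmaC A : G A -> G (~` A).
Proof. by case: sG => _ GD _; rewrite -setTD; apply: GD. Qed.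

Lemma sigmaT : G setT.
Proof. by rewrite -setC0; apply: sigmaC; case: sG. Qed.

Lemma sigmaI A B : G A -> G B -> G (A `&` B).
Proof.
move=> GA GB; rewrite -[A `&` B]setCK setCI.
by apply: sigmaC; apply: (sigmaU sG); apply: sigmaC.
Qed.

Lemma sigmaD A B : G A -> G B -> G (A `\` B).
Proof. by move=> GA GB; rewrite setDE; apply: sigmaI => //; apply: sigmaC. Qed.

Lemma sigma_cst (P : Prop) : G [set _ | P].
Proof.
have [p|np] := pselect P.
  by rewrite (_ : [set _ | P] = setT); [exact: sigmaT | apply/seteqP; split].
by rewrite (_ : [set _ | P] = set0); [case: sG | apply/seteqP; split].
Qed.

Lemma sigma_bigcap (A : (set T)^nat) : (forall n, G (A n)) -> G (\bigcap_n A n).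
Proof.
move=> GA; rewrite -[X in G X]setCK setC_bigcap.
by apply: sigmaC; case: sG => _ _; apply => n; apply: sigmaC.
Qed.

End sigma_algebra_setT_closure.

Lemma sigma_algebra_image_sub (aT rT : Type) (D : set aT) (E : set rT)
    (f : aT -> rT) (G : set (set aT)) :
  (forall x, D x -> E (f x)) -> sigma_algebra D G ->
  sigma_algebra E (image_set_system D f G).
Proof.
move=> fDE [G0 GD GU]; split; rewrite /image_set_system /=.
- by rewrite preimage_set0 setI0.
- move=> A GA; rewrite (_ : _ `&` _ = D `\` (D `&` f @^-1` A)); first exact: GD.
  apply/seteqP; split => x /=; first by move=> [Dx [_ nA]]; split => // -[].
  by move=> [Dx nDA]; split => //; split; [exact: fDE | move=> ?; apply: nDA].
- by move=> A GA; rewrite preimage_bigcup setI_bigcupr; exact: GU.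
Qed.

Lemma bigcup_bigcap_addn (T : Type) (A : (set T)^nat) (N : nat) :
  \bigcup_m \bigcap_n A (n + m)%N = \bigcup_m \bigcap_n A (n + (m + N))%N.
Proof.
apply/seteqP; split => w /= [m _ Aw]; last by exists (m + N)%N.
by exists m => // n _; rewrite (addnC m) addnA; apply: Aw.
Qed.

Definition enum_rat (R : realType) (n : nat) : R :=
  ratr (odflt 0 (unpickle n) : rat).

Lemma enum_rat_between (R : realType) (x y : R) :
  x < y -> exists n, x < enum_rat R n < y.
Proof.
move=> /rat_in_itvoo[q]; rewrite in_itv /= => xqy.
by exists (pickle q); rewrite /enum_rat pickleK.
Qed.

Lemma lef_invS (R : realType) (m n : nat) :
  (m <= n)%N -> n.+1%:R^-1 <= m.+1%:R^-1 :> R.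
Proof. by move=> mn; rewrite lef_pV2 ?posrE // ler_nat ltnS. Qed.

Lemma le_add_invS (R : realType) (x t : R) :
  (forall n, x < t + n.+1%:R^-1) -> x <= t.
Proof.
move=> xt; rewrite leNgt; apply/negP => /ltr_add_invr[n].
by rewrite ltNge (ltW (xt n)).
Qed.

Lemma stopping_timeEFin d (Omega : measurableType d) (R : realType)
    (F : R -> set (set Omega)) (s : Omega -> R) :
  stopping_time F (fun w => (s w)%:E) <->
  (forall w, 0 <= s w) /\ (forall t, 0 <= t -> F t [set w | s w <= t]).
Proof.
have sE t : [set w | ((s w)%:E <= t%:E)%E] = [set w | s w <= t].
  by apply/seteqP; split => w /=; rewrite lee_fin.
split=> -[s0 sF]; split=> [w|t t0].
- by rewrite -lee_fin.
- by rewrite -sE; apply: sF.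
- by rewrite lee_fin.
- by rewrite sE; apply: sF.
Qed.

Section filtration_theory.
Context {d : measure_display} {Omega : measurableType d} {R : realType}.
Variable F : R -> set (set Omega).
Hypothesis hF : filtration F.

Let sigmaF t : 0 <= t -> sigma_algebra setT (F t).
Proof. by case: hF => + _ _; apply. Qed.

Let measurableF t : 0 <= t -> F t `<=` measurable.
Proof. by case: hF => _ + _; apply. Qed.

Let monoF s t : 0 <= s -> s <= t -> F s `<=` F t.
Proof. by case: hF => _ _; apply. Qed.

Section stopping_time_sets.
Variable s : Omega -> R.
Hypotheses (s_ge0 : forall w, 0 <= s w)
           (sF : forall t, 0 <= t -> F t [set w | s w <= t]).

Lemma stopping_time_le r u : 0 <= u -> r <= u -> F u [set w | s w <= r].
Proof.
move=> u0 ru; have [r0|r0] := ltP r 0; last exact: monoF (sF r0).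
rewrite (_ : [set w | s w <= r] = set0); first by case: (sigmaF u0).
by apply/seteqP; split => // w /= swr; have := lt_le_trans r0 (s_ge0 w); rewrite ltNge swr.
Qed.

Lemma stopping_time_measurable r : measurable [set w | s w <= r].
Proof.
have u0 : 0 <= Num.max r 0 by rewrite le_max lexx orbT.
by apply: (measurableF u0); apply: stopping_time_le; rewrite // le_max lexx.
Qed.

Lemma stopping_time_le_stopping (tau : Omega -> \bar R) :
  stopping_time F tau ->
  forall u, 0 <= u -> F u ([set w | (tau w <= (s w)%:E)%E] `&` [set w | s w <= u]).
Proof.
move=> [tau0 tauF] u u0; pose q := enum_rat R.
(* When [tau <= u], [s < tau] iff [s <= q < tau] for some rational [q] in [[0, u]]. *)
pose Y n := if 0 <= q n <= u
  then [set w | s w <= q n] `\` [set w | (tau w <= (q n)%:E)%E] else set0.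
have -> : [set w | (tau w <= (s w)%:E)%E] `&` [set w | s w <= u] =
    ([set w | s w <= u] `&` [set w | (tau w <= u%:E)%E]) `\` \bigcup_n Y n.
  apply/seteqP; split => w /=.
    move=> [tau_s su]; split; first by split=> //; apply: le_trans tau_s _.
    move=> [n _]; rewrite /Y; case: ifP => // _ [sq]; apply.
    exact: le_trans tau_s _.
  move=> [[su tau_u] notY]; split => //; rewrite leNgt; apply/negP => s_tau.
  have [r taur] : exists r, tau w = r%:E.
    by move: tau_u s_tau; case: (tau w) => [r _ _| |]; [exists r| |].
  move: s_tau tau_u; rewrite taur !lte_fin !lee_fin => sr ru.
  have [n /andP[sq qr]] := enum_rat_between sr.
  apply: notY; exists n => //; rewrite /Y ifT; last first.
    by rewrite (le_trans (s_ge0 w) (ltW sq)) (le_trans (ltW qr) ru).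
  split=> /=; first exact: ltW.
  by rewrite taur lee_fin; apply/negP; rewrite -ltNge.
apply: sigmaD; [exact: sigmaF | apply: sigmaI; [exact: sigmaF | exact: sF | exact: tauF] |].
case: (sigmaF u0) => _ _; apply => n; rewrite /Y; case: ifP => [/andP[q0 qu]|_].
  by apply: sigmaD; [exact: sigmaF | exact: stopping_time_le | exact: monoF (tauF _ q0)].
by case: (sigmaF u0).
Qed.

End stopping_time_sets.

Lemma stopping_time_min (s : Omega -> R) t :
  (forall u, 0 <= u -> F u [set w | s w <= u]) ->
  forall u, 0 <= u -> F u [set w | Num.min (s w) t <= u].
Proof.
move=> sF u u0.
have -> : [set w | Num.min (s w) t <= u] = [set w | s w <= u] `|` [set _ | t <= u].
  by apply/seteqP; split => w /=; rewrite ge_min => /orP.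
by apply: (sigmaU (sigmaF u0)); [exact: sF | exact: sigma_cst (sigmaF u0) _].
Qed.

Lemma stopping_time_of_lt (s : Omega -> R) :
  Defs.right_continuous F -> (forall w, 0 <= s w) ->
  (forall r, 0 <= r -> F r [set w | s w < r]) ->
  stopping_time F (fun w => (s w)%:E).
Proof.
move=> rcF s0 sF; apply/stopping_timeEFin; split => // t t0.
rewrite rcF // => u /= tu; have u0 := le_trans t0 (ltW tu).
have -> : [set w | s w <= t] =
    \bigcap_n [set w | s w < Num.min u (t + n.+1%:R^-1)].
  apply/seteqP; split => w /=.
    move=> st n _ /=; rewrite lt_min (le_lt_trans st tu) (le_lt_trans st) //.
    by rewrite ltrDl invr_gt0.
  by move=> slt; apply: le_add_invS => n; have := slt n I; rewrite /= lt_min => /andP[].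
apply: sigma_bigcap; first exact: sigmaF.
move=> n; have mu : Num.min u (t + n.+1%:R^-1) <= u by rewrite ge_min lexx.
apply: (monoF _ mu); last apply: sF.
all: by rewrite le_min u0 addr_ge0 // invr_ge0.
Qed.

Section stopped.
Variable s : Omega -> R.
Hypotheses (s_ge0 : forall w, 0 <= s w)
           (sF : forall t, 0 <= t -> F t [set w | s w <= t]).

Let Fs := stopped_filtration F (fun w => (s w)%:E).

Lemma stopped_filtration_le r t : 0 <= t -> r <= t -> Fs t [set w | s w <= r].
Proof.
move=> t0 rt; split; first exact: stopping_time_measurable.
move=> u u0.
have -> : [set w | s w <= r] `&` [set w | (Order.min (s w)%:E t%:E <= u%:E)%E] =
    [set w | s w <= Num.min r u].
  apply/seteqP; split => w /=; rewrite -EFin_min lee_fin ge_min le_min.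
    move=> [sr /orP[su|tu]]; rewrite sr ?su //.
    exact: le_trans sr (le_trans rt tu).
  by move=> /andP[-> ->].
by apply: stopping_time_le; rewrite ?ge_min ?lexx ?orbT.
Qed.

Lemma stopped_shift_stopping c :
  0 <= c -> stopping_time Fs (fun w => (s w + c)%:E).
Proof.
move=> c0; apply/stopping_timeEFin; split=> [w|t t0]; first exact: addr_ge0.
have -> : [set w | s w + c <= t] = [set w | s w <= t - c].
  by apply/seteqP; split => w /=; rewrite lerBrDr.
by apply: stopped_filtration_le; rewrite // gerBl.
Qed.

Definition stop_at (p : Omega * R) : Omega * R := (p.1, Num.min (s p.1) p.2).

(* [stop_restrict tau] is [tau] on [{tau <= s}] and [+oo] elsewhere, so that
   [[stop_restrict tau, oo[[ is the preimage of [[tau, oo[[ under [stop_at]. *)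
Definition stop_restrict (tau : Omega -> \bar R) (w : Omega) : \bar R :=
  if (tau w <= (s w)%:E)%E then tau w else +oo%E.

Lemma stop_restrict_le tau w t :
  (stop_restrict tau w <= t%:E)%E = (tau w <= (Num.min (s w) t)%:E)%E.
Proof. by rewrite /stop_restrict EFin_min le_min; case: ifP. Qed.

Lemma stop_restrict_stopping tau :
  stopping_time F tau -> stopping_time Fs (stop_restrict tau).
Proof.
move=> tauF; split=> [w|t t0].
  by rewrite /stop_restrict; case: ifP => _; [case: tauF | exact: le0y].
pose m w := Num.min (s w) t.
have m0 w : 0 <= m w by rewrite le_min s_ge0.
have tau_m := stopping_time_le_stopping m0 (stopping_time_min t sF) tauF.
have -> : [set w | (stop_restrict tau w <= t%:E)%E] = [set w | (tau w <= (m w)%:E)%E].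
  by apply/seteqP; split => w /=; rewrite stop_restrict_le.
split.
  rewrite -[X in measurable X]setIT -(_ : [set w | m w <= t] = setT).
    exact: measurableF (tau_m t t0).
  by apply/seteqP; split => // w _; rewrite /= ge_min lexx orbT.
move=> u u0; rewrite (_ : [set w | _ <= u%:E]%E = [set w | m w <= u]).
  exact: tau_m.
by apply/seteqP; split => w /=; rewrite -EFin_min lee_fin.
Qed.

Lemma optional_sets_stopped O :
  optional_sets F O ->
  optional_sets Fs ([set p | 0 <= p.2] `&` stop_at @^-1` O).
Proof.
pose D := [set p : Omega * R | 0 <= p.2].
move=> OF; apply: (smallest_sub (X := image_set_system D stop_at (optional_sets Fs))) OF.
  apply: sigma_algebra_image_sub; last exact: smallest_sigma_algebra.
  by move=> p /= p0; rewrite /D /= le_min s_ge0.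
move=> _ [tau tauF <-]; rewrite /image_set_system /=.
have -> : [set p | 0 <= p.2] `&` stop_at @^-1`
    [set p | 0 <= p.2 /\ (tau p.1 <= p.2%:E)%E] =
    [set p | 0 <= p.2 /\ (stop_restrict tau p.1 <= p.2%:E)%E].
  apply/seteqP; split => -[w t] /=; rewrite stop_restrict_le; first by case=> ? [].
  by move=> [t0 ?]; do !split; rewrite // le_min s_ge0.
by apply: sub_sigma_algebra; exists (stop_restrict tau) => //; exact: stop_restrict_stopping.
Qed.

Lemma optional_sets_stopped_lt :
  optional_sets Fs [set p | 0 <= p.2 /\ s p.1 < p.2].
Proof.
have -> : [set p | 0 <= p.2 /\ s p.1 < p.2] =
    \bigcup_n [set p | 0 <= p.2 /\ ((s p.1 + n.+1%:R^-1)%:E <= p.2%:E)%E].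
  apply/seteqP; split => -[w t] /=.
    by move=> [t0 /ltr_add_invr[n st]]; exists n => //; split; rewrite // lee_fin ltW.
  move=> [n _ [t0]]; rewrite lee_fin => st; split => //.
  by apply: lt_le_trans st; rewrite ltrDl invr_gt0.
apply: sigma_algebra_bigcup => n; apply: sub_sigma_algebra.
by exists (fun w => (s w + n.+1%:R^-1)%:E) => //; apply: stopped_shift_stopping.
Qed.

Lemma optional_stopped_payoff (Pp Rp : Omega -> R -> R) :
  optional F Pp -> optional F Rp ->
  optional Fs (fun w t => Xhat Pp Rp (fun=> t) w (s w)).
Proof.
move=> oP oR B mB.
pose D := [set p : Omega * R | 0 <= p.2].
have -> : [set p | 0 <= p.2 /\ B (Xhat Pp Rp (fun=> p.2) p.1 (s p.1))] =
    [set p | D p /\ if s p.1 < p.2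
      then (D `&` stop_at @^-1` [set p | 0 <= p.2 /\ B (Pp p.1 p.2)]) p
      else (D `&` stop_at @^-1` [set p | 0 <= p.2 /\ B (Rp p.1 p.2)]) p].
  apply/seteqP; split => -[w t]; rewrite /Xhat /D /=; have := s_ge0 w;
    by have [_|_] := ltP (s w) t; tauto.
apply: (sigma_ite (smallest_sigma_algebra _ _)).
- exact: optional_sets_stopped_lt.
- exact: optional_sets_stopped (oP B mB).
- exact: optional_sets_stopped (oR B mB).
Qed.

End stopped.

Section pre_theta.
Variable theta : Omega -> R.

Definition pre_theta (t : R) : set (set Omega) :=
  [set A | measurable A /\
     exists2 B, F t B & forall w, t < theta w -> A w <-> B w].

Lemma pre_theta_filtration : filtration pre_theta.
Proof.
split=> [t t0|t t0 A []//|s t s0 st A [mA [B FB AB]]]; last first.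
  split=> //; exists B; first exact: monoF FB.
  by move=> w tw; apply: AB; exact: le_lt_trans tw.
have [F0 FD FU] := sigmaF t0; split.
- by split=> //; exists set0.
- move=> A [mA [B FB AB]]; split; first exact: measurableD.
  by exists (setT `\` B); [exact: FD | move=> w /AB /=; tauto].
- move=> A AF; split; first by apply: bigcupT_measurable => n; case: (AF n).
  have /choice[B AB] n : exists B, F t B /\ forall w, t < theta w -> A n w <-> B w.
    by have [_ [B FB AB]] := AF n; exists B.
  exists (\bigcup_n B n); first by apply: FU => n; case: (AB n).
  by move=> w tw; split=> -[n _ /(AB n).2 ABn]; exists n => //; apply/ABn.
Qed.

Lemma pre_theta_right_continuous :
  Defs.right_continuous F -> Defs.right_continuous pre_theta.
Proof.
have [_ _ monoH] := pre_theta_filtration.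
move=> rcF t t0; apply/seteqP; split=> [A At u /= tu|A At].
  exact: monoH t0 (ltW tu) _ At.
pose tn n := t + n.+1%:R^-1.
have t_tn n : t < tn n by rewrite ltrDl invr_gt0.
have tn_le m n : (m <= n)%N -> tn n <= tn m by move=> mn; rewrite lerD2l lef_invS.
have /choice[B AB] n :
    exists B, F (tn n) B /\ forall w, tn n < theta w -> A w <-> B w.
  by have [_ [B FB AB]] := At _ (t_tn n); exists B.
split; first by have [] := At _ (t_tn 0%N).
(* The lim inf of the [B n] lies in every [F u], [u > t], as it does not depend
   on finitely many terms. *)
exists (\bigcup_m \bigcap_n B (n + m)%N).
  rewrite rcF // => u /= /ltr_add_invr[N tNu].
  have u0 : 0 <= u by apply: le_trans t0 (ltW (lt_trans (t_tn N) tNu)).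
  rewrite (bigcup_bigcap_addn _ N); case: (sigmaF u0) => _ _ FU.
  apply: FU => m; apply: sigma_bigcap; first exact: sigmaF u0.
  move=> n; apply: monoF (AB _).1; first exact: le_trans t0 (ltW (t_tn _)).
  by apply: le_trans (ltW tNu); apply: tn_le; rewrite addnA leq_addl.
move=> w /ltr_add_invr[N tNw].
have ABw n : (N <= n)%N -> A w <-> B n w.
  by move=> Nn; apply: (AB n).2; exact: le_lt_trans (tn_le _ _ Nn) tNw.
split=> [Aw|[m _ Bw]]; first by exists N => // n _; apply/(ABw _ (leq_addl n N)).
by apply/(ABw _ (leq_addr m N)); exact: Bw.
Qed.

Lemma sub_pre_theta t : 0 <= t -> F t `<=` pre_theta t.
Proof. by case: hF => _ mF _ t0 A FA; split; [exact: mF FA | exists A]. Qed.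

Lemma theta_stopping_pre_theta :
  measurable_fun setT theta -> (forall w, 0 <= theta w) ->
  stopping_time pre_theta (fun w => (theta w)%:E).
Proof.
move=> mtheta theta0; apply/stopping_timeEFin; split=> // t t0; split.
  rewrite (_ : [set w | theta w <= t] = setT `&` theta @^-1` `]-oo, t]).
    exact: mtheta.
  by apply/seteqP; split => w /=; rewrite in_itv //= => -[].
by exists set0 => [|w tw]; [case: (sigmaF t0) | rewrite /= leNgt tw].
Qed.

Lemma prog_enl_sub_pre_theta t :
  Defs.right_continuous F -> measurable_fun setT theta ->
  (forall w, 0 <= theta w) -> 0 <= t -> prog_enl F theta t `<=` pre_theta t.
Proof.
move=> rcF mtheta theta0 t0 A; apply.
- exact: pre_theta_filtration.
- exact: pre_theta_right_continuous.
- exact: sub_pre_theta.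
- exact: theta_stopping_pre_theta.
Qed.

End pre_theta.

Section hit_time.
Variables (C : R -> set Omega) (T : R).
Hypotheses (CF : forall t, 0 <= t -> F t (C t)) (T0 : 0 <= T).

Definition hit_set (w : Omega) : set R := [set T] `|`
  [set enum_rat R n | n in [set n | 0 <= enum_rat R n /\ C (enum_rat R n) w]].

Definition hit_time (w : Omega) : R := inf (hit_set w).

Lemma hit_set_neq0 w : hit_set w !=set0.
Proof. by exists T; left. Qed.

Lemma hit_set_ge0 w : lbound (hit_set w) 0.
Proof. by move=> _ [->|[n [q0 _] <-]]. Qed.

Lemma hit_time_ge0 w : 0 <= hit_time w.
Proof. by apply: lb_le_inf; [exact: hit_set_neq0 | exact: hit_set_ge0]. Qed.

Lemma hit_time_le w x : hit_set w x -> hit_time w <= x.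
Proof. by apply: ge_inf; exists 0; exact: hit_set_ge0. Qed.

Lemma hit_time_leT w : hit_time w <= T.
Proof. by apply: hit_time_le; left. Qed.

Lemma hit_time_lt r : 0 <= r -> F r [set w | hit_time w < r].
Proof.
move=> r0; pose q := enum_rat R.
have -> : [set w | hit_time w < r] =
    [set _ | T < r] `|` \bigcup_n [set w | 0 <= q n < r /\ C (q n) w].
  apply/seteqP; split => w /=.
    move=> /(inf_lt (hit_set_neq0 w)).
    by move=> [_ [->|[n [q0 Cq] <-]] lt_r]; [left | right; exists n => //; rewrite q0].
  move=> [Tr|[n _ [/andP[q0 qr] Cq]]]; first exact: le_lt_trans (hit_time_leT w) Tr.
  by apply: le_lt_trans qr; apply: hit_time_le; right; exists n.
apply: (sigmaU (sigmaF r0)); first exact: sigma_cst (sigmaF r0) _.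
case: (sigmaF r0) => F0 _; apply => n.
have [/andP[q0 qr]|nq] := boolP (0 <= q n < r).
  rewrite (_ : [set w | _ /\ _] = C (q n)); first exact: monoF q0 (ltW qr) _ (CF q0).
  by apply/seteqP; split => w /= => [[]|]; rewrite ?q0 ?qr.
by rewrite (_ : [set w | _ /\ _] = set0) //; apply/seteqP; split => w // [/negP].
Qed.

Lemma hit_time_stopping :
  Defs.right_continuous F -> stopping_time F (fun w => (hit_time w)%:E).
Proof.
by move=> rcF; apply: stopping_time_of_lt => //; [exact: hit_time_ge0 | exact: hit_time_lt].
Qed.

Variables (theta sh : Omega -> R).
Hypotheses (shT : forall w, 0 <= sh w <= T)
  (shC : forall t w, 0 <= t -> t < theta w -> sh w <= t <-> C t w).

Lemma hit_time_before w : sh w < theta w -> hit_time w = sh w.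
Proof.
move=> sh_theta; have /andP[sh0 shT'] := shT w.
apply/eqP; rewrite eq_le; apply/andP; split.
  rewrite leNgt; apply/negP => sh_hit.
  have : sh w < Num.min (hit_time w) (theta w) by rewrite lt_min sh_hit.
  move=> /enum_rat_between[n /andP[shq]]; rewrite lt_min => /andP[q_hit q_theta].
  have q0 := le_trans sh0 (ltW shq).
  have : hit_set w (enum_rat R n).
    by right; exists n => //; split => //; apply/shC => //; exact: ltW.
  by move=> /hit_time_le; rewrite leNgt q_hit.
apply: lb_le_inf; first exact: hit_set_neq0.
move=> _ [->|[n [q0 Cq] <-]] //.
have [q_theta|theta_q] := ltP (enum_rat R n) (theta w).
  exact: (shC q0 q_theta).2 Cq.
exact: ltW (lt_le_trans sh_theta theta_q).
Qed.

Lemma hit_time_after w : theta w <= sh w -> theta w <= hit_time w.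
Proof.
move=> theta_sh; apply: lb_le_inf; first exact: hit_set_neq0.
move=> _ [->|[n [q0 Cq] <-]]; first by apply: le_trans theta_sh _; case/andP: (shT w).
rewrite leNgt; apply/negP => q_theta.
have := (shC q0 q_theta).2 Cq; rewrite leNgt => /negP; apply.
exact: lt_le_trans q_theta theta_sh.
Qed.

Lemma min_hit_time w :
  Num.min (hit_time w) (theta w) = Num.min (sh w) (theta w).
Proof.
have [sh_theta|theta_sh] := ltP (sh w) (theta w).
  by rewrite hit_time_before // (min_idPl (ltW sh_theta)).
by apply/min_idPr; exact: hit_time_after.
Qed.

End hit_time.

Lemma prog_enl_stopping_time_min (theta sh : Omega -> R) (T : R) :
  Defs.right_continuous F -> measurable_fun setT theta ->
  (forall w, 0 <= theta w) -> 0 <= T -> (forall w, 0 <= sh w <= T) ->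
  stopping_time (prog_enl F theta) (fun w => (sh w)%:E) ->
  exists s : Omega -> R, [/\ forall w, 0 <= s w <= T,
    stopping_time F (fun w => (s w)%:E) &
    forall w, Num.min (s w) (theta w) = Num.min (sh w) (theta w)].
Proof.
move=> rcF mtheta theta0 T0 shT /stopping_timeEFin[_ shG].
have /choice[C shC] t : exists C, 0 <= t ->
    F t C /\ forall w, t < theta w -> sh w <= t <-> C w.
  have [t0|_] := boolP (0 <= t); last by exists set0.
  have [_ [C FC shC]] := prog_enl_sub_pre_theta rcF mtheta theta0 t0 (shG t t0).
  by exists C.
have CF t (t0 : 0 <= t) := (shC t t0).1.
exists (hit_time C T); split.
- by move=> w; rewrite hit_time_ge0 ?hit_time_leT.
- exact: hit_time_stopping.
- by apply: min_hit_time => // t w t0; exact: (shC t t0).2.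
Qed.

End filtration_theory.

Lemma Xhat_min d (Omega : measurableType d) (R : realType)
    (Pp Rp : Omega -> R -> R) (theta : Omega -> R) w (t : R) :
  Xhat Pp Rp theta w (Num.min t (theta w)) = Xhat Pp Rp theta w t.
Proof. by rewrite /Xhat; have [t_lt|t_ge] := ltP t (theta w); rewrite ?t_lt ?ltxx. Qed.

Unset Implicit Arguments.
Set Strict Implicit.

Theorem lemma3p1 (d : measure_display) (Omega : measurableType d)
  (R : realType) (P : probability Omega R) (F : R -> set (set Omega))
  (theta : Omega -> R) (T : R) (Pp Rp : Omega -> R -> R) :
  usual_conditions P F ->
  measurable_fun setT theta ->
  (forall w, 0 < theta w) ->
  0 < T ->
  optional F Pp -> optional F Rp ->
  bounded_process Pp -> bounded_process Rp ->
  (forall sh : Omega -> R, (forall w, 0 <= sh w <= T) ->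
     stopping_time (prog_enl F theta) (fun w => (sh w)%:E) ->
     exists s : Omega -> R, [/\ (forall w, 0 <= s w <= T),
       stopping_time F (fun w => (s w)%:E) &
       forall w,
         Xhat Pp Rp theta w (sh w) = Xhat Pp Rp theta w (Num.min (s w) (theta w)) /\
         Xhat Pp Rp theta w (Num.min (s w) (theta w)) = Xhat Pp Rp theta w (s w)])
  /\
  (forall s : Omega -> R, (forall w, 0 <= s w <= T) ->
     stopping_time F (fun w => (s w)%:E) ->
     exists x : Omega -> R -> R,
       optional (stopped_filtration F (fun w => (s w)%:E)) x /\
       forall w, Xhat Pp Rp theta w (s w) = x w (theta w)).
Proof.
move=> [hF rcF _] mtheta theta_gt0 T_gt0 oP oR _ _.
have theta0 w := ltW (theta_gt0 w).
split=> [sh shT shG | s _ /stopping_timeEFin[s0 sF]].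
  have [s [sT sF s_sh]] :=
    prog_enl_stopping_time_min hF rcF mtheta theta0 (ltW T_gt0) shT shG.
  exists s; split=> // w; split; last exact: Xhat_min.
  by rewrite s_sh Xhat_min.
exists (fun w t => Xhat Pp Rp (fun=> t) w (s w)); split=> //.
exact: optional_stopped_payoff.
Qed.
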